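(* Let $k$ be an algebraically closed field of characteristic $0$, let $K$ be a function field of dimension $2$ over $k$, and let $(R,\mathfrak m)$ be a $2$-dimensional regular local ring with fraction field $K$ and residue field $R/\mathfrak m\cong k$. Let $\nu$ be a non-divisorial valuation of $K$ (i.e. a valuation whose residue field has transcendence degree $0$ over $k$) centered on $R$, with value semigroup $S=\{\nu(x)\mid x\in\mathfrak m\setminus\{0\}\}$. Then for every $s\in S$, the length $l(s)=\dim_k\big(I_s/I_s^+\big)$ equals $1$, where $I_s=\{x\in R\mid \nu(x)\ge s\}$ and $I_s^+=\{x\in R\mid \nu(x)>s\}$.
   Context: A valuation $\nu$ of $K$ centered on $R$ has valuation ring $(V,\mathfrak m_V)$ with $R\subseteq V$, $\mathfrak m_V\cap R=\mathfrak m$. The divisorial valuations are those with rank $1$, rational rank $1$ and residue field $V/\mathfrak m_V$ of transcendence degree $1$ over $k$; by Abhyankar's inequality every other valuation centered on $R$ has residue field of transcendence degree $0$ over $k$, and these are called non-divisorial. The quotient $I_s/I_s^+$ is regarded as a vector space over $R/\mathfrak m\cong k$. *)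

From HB Require Import structures.
From mathcomp Require Import all_boot all_order all_algebra.
From mathcomp Require Import mpoly.
Set Implicit Arguments. Unset Strict Implicit. Unset Printing Implicit Defensive.
Import Order.TTheory GRing.Theory Num.Theory.
Local Open Scope ring_scope.

Section FieldDefs.
Variables (k K : fieldType) (iota : {rmorphism k -> K}).

Definition alg_indep (n : nat) (g : 'I_n -> K) : Prop :=
  forall p : {mpoly k[n]}, mmap iota g p = 0 -> p = 0.

Definition fin_gen_field : Prop :=
  exists (n : nat) (g : 'I_n -> K), forall z : K,
    exists p q : {mpoly k[n]}, mmap iota g q != 0 /\ z = mmap iota g p / mmap iota g q.

Definition trdeg2 : Prop :=
  (exists g : 'I_2 -> K, alg_indep g) /\ (forall g : 'I_3 -> K, ~ alg_indep g).

Definition function_field_dim2 : Prop := fin_gen_field /\ trdeg2.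

Variable R : {pred K}.

Definition is_subring : Prop :=
  [/\ 0 \in R, 1 \in R, (forall x y, x \in R -> y \in R -> x - y \in R)
    & (forall x y, x \in R -> y \in R -> x * y \in R)].

Definition is_fraction_field : Prop :=
  forall z : K, exists a b, [/\ a \in R, b \in R, b != 0 & z = a / b].

Definition nonunits : pred K :=
  fun x => (x \in R) && ~~ ((x != 0) && (x^-1 \in R)).

Definition is_ideal (I : pred K) : Prop :=
  [/\ {subset I <= R}, 0 \in I, (forall x y, x \in I -> y \in I -> x + y \in I)
    & (forall r x, r \in R -> x \in I -> r * x \in I)].

Definition fin_gen_ideal (I : pred K) : Prop :=
  exists s : seq K, all (fun x => x \in I) s /\
    forall x, x \in I -> exists c : 'I_(size s) -> K,
      (forall i, c i \in R) /\ x = \sum_(i < size s) c i * s`_i.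

Definition noetherian : Prop := forall I : pred K, is_ideal I -> fin_gen_ideal I.

Definition is_prime_ideal (P : pred K) : Prop :=
  [/\ is_ideal P, 1 \notin P
    & forall x y, x \in R -> y \in R -> x * y \in P -> x \in P \/ y \in P].

Definition prime_chain (n : nat) (P : nat -> pred K) : Prop :=
  (forall i, (i <= n)%N -> is_prime_ideal (P i)) /\
  (forall i, (i < n)%N -> {subset P i <= P i.+1} /\ exists x, x \in P i.+1 /\ x \notin P i).

Definition krull_dim2 : Prop :=
  (exists P, prime_chain 2 P) /\ (forall P, ~ prime_chain 3 P).

Definition is_local : Prop := is_ideal nonunits.

Definition regular_local_dim2 : Prop :=
  [/\ is_subring, noetherian, is_local, krull_dim2 &
    exists a b, [/\ a \in nonunits, b \in nonunits &
      forall x, x \in nonunits -> exists r s, [/\ r \in R, s \in R & x = r * a + s * b]]].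

(* R contains k and the natural map k -> R/m is onto, i.e. R/m = k *)
Definition residue_field_k : Prop :=
  (forall c : k, iota c \in R) /\
  (forall x, x \in R -> exists c : k, x - iota c \in nonunits).

Variable G : porderZmodType.

Definition ordered_abelian_group : Prop :=
  total (@Order.le _ G) /\ (forall a b c : G, a <= b -> a + c <= b + c).

(* nu : K^* -> G is a valuation (its value at 0 is irrelevant; 0 has value +oo) *)
Definition is_valuation (nu : K -> G) : Prop :=
  (forall x y, x != 0 -> y != 0 -> nu (x * y) = nu x + nu y) /\
  (forall x y, x != 0 -> y != 0 -> x + y != 0 ->
     (nu x <= nu (x + y)) || (nu y <= nu (x + y))).

Definition val_ring (nu : K -> G) : pred K := fun x => (x == 0) || (0 <= nu x).
Definition val_max (nu : K -> G) : pred K := fun x => (x == 0) || (0 < nu x).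

Definition centered_on (nu : K -> G) : Prop :=
  (forall x, x \in R -> x \in val_ring nu) /\
  (forall x, x \in R -> (x \in val_max nu) = (x \in nonunits)).

(* residue field V/m_V has transcendence degree 0 over k: every residue
   class is algebraic over k *)
Definition non_divisorial (nu : K -> G) : Prop :=
  forall x, x \in val_ring nu ->
    exists p : {poly k}, p != 0 /\ (map_poly iota p).[x] \in val_max nu.

Definition I_ge (nu : K -> G) (s : G) : pred K :=
  fun x => (x \in R) && ((x == 0) || (s <= nu x)).
Definition I_gt (nu : K -> G) (s : G) : pred K :=
  fun x => (x \in R) && ((x == 0) || (s < nu x)).

(* dim_k (I / J) = 1, for R-submodules J <= I of K killed by m:
   the quotient has a nonzero class spanning it over k *)
Definition quot_dim1 (I J : pred K) : Prop :=
  exists x, [/\ x \in I, x \notin J &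
    forall y, y \in I -> exists c : k, y - iota c * x \in J].

End FieldDefs.

From HB Require Import structures.
From mathcomp Require Import all_boot all_order all_algebra.
From mathcomp Require Import mpoly.
Set Implicit Arguments.
Unset Strict Implicit.
Unset Printing Implicit Defensive.
Import Order.TTheory GRing.Theory Num.Theory.
Local Open Scope ring_scope.

(* Take a nonzero t in m and y with nu y = nu t. The quotient z = y / t has
   value 0, and its residue is algebraic over k, hence lies in k because k is
   algebraically closed: splitting a polynomial vanishing on the residue into
   linear factors, some z - c must have positive value. Then
   y - c t = t (z - c) lies in I_s^+, so the class of t spans I_s / I_s^+. *)

Section OrderedGroup.

Variable G : porderZmodType.
Hypothesis G_ordered : ordered_abelian_group G.

Lemma lerD2l_of_le (c a b : G) : a <= b -> c + a <= c + b.
Proof. by move=> le_ab; rewrite ![c + _]addrC G_ordered.2. Qed.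

Lemma ltrDr_of_gt0 (a s : G) : 0 < a -> s < s + a.
Proof.
rewrite !lt_def => /andP [a_neq0 a_ge0]; apply/andP; split.
  by apply: contra a_neq0 => /eqP saE; apply/eqP/(addrI s); rewrite addr0.
by have := lerD2l_of_le s a_ge0; rewrite addr0.
Qed.

Lemma paddr_eq0l (a b : G) : 0 <= a -> 0 <= b -> a + b = 0 -> a = 0.
Proof.
move=> a_ge0 b_ge0 abE; apply/eqP; rewrite eq_le a_ge0 andbT.
by have := lerD2l_of_le a b_ge0; rewrite abE addr0.
Qed.

Lemma double_eq0 (a : G) : a + a = 0 -> a = 0.
Proof.
move=> aaE; have [a_ge0|a_le0] := orP (G_ordered.1 0 a).
  exact: paddr_eq0l aaE.
have := lerD2l_of_le a a_le0; rewrite aaE addr0 => a_ge0.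
by apply/eqP; rewrite eq_le a_le0.
Qed.

Section Valuation.

Variables (K : fieldType) (nu : K -> G).
Hypothesis nu_valuation : is_valuation nu.

Let nuM := nu_valuation.1.

Lemma valuation1 : nu 1 = 0.
Proof. by apply: (addrI (nu 1)); rewrite addr0 -nuM ?oner_neq0 ?mulr1. Qed.

Lemma valuationV x : x != 0 -> nu x^-1 = - nu x.
Proof.
move=> x_neq0; apply: (addrI (nu x)).
by rewrite -nuM ?invr_eq0 // mulfV // valuation1 subrr.
Qed.

Lemma valuationN x : x != 0 -> nu (- x) = nu x.
Proof.
have m1_neq0 : (-1 : K) != 0 by rewrite oppr_eq0 oner_neq0.
have nuN1 : nu (-1) = 0.
  by apply: double_eq0; rewrite -nuM // mulrNN mulr1 valuation1.
by move=> x_neq0; rewrite -mulN1r nuM // nuN1 add0r.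
Qed.

Lemma valuation_unit x :
  x != 0 -> x \in val_ring nu -> x^-1 \in val_ring nu -> nu x = 0.
Proof.
rewrite !unfold_in /= invr_eq0 => x_neq0; rewrite (negPf x_neq0) /=.
move=> x_ge0 xV_ge0; apply: (paddr_eq0l x_ge0 xV_ge0).
by rewrite -nuM ?invr_eq0 // mulfV // valuation1.
Qed.

Lemma val_ringB x y :
  x \in val_ring nu -> y \in val_ring nu -> x - y \in val_ring nu.
Proof.
rewrite !unfold_in /=.
have [-> _|x_neq0 /= x_ge0] := eqVneq x 0.
  by rewrite sub0r oppr_eq0; case: eqVneq => //= y_neq0; rewrite valuationN.
have [->|y_neq0 /= y_ge0] := eqVneq y 0; first by rewrite subr0 x_ge0 orbT.
have [//|xy_neq0 /=] := eqVneq (x - y) 0.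
have Ny_neq0 : - y != 0 by rewrite oppr_eq0.
case/orP: (nu_valuation.2 x (- y) x_neq0 Ny_neq0 xy_neq0).
  exact: le_trans.
by rewrite valuationN //; apply: le_trans.
Qed.

Definition val_units : pred K := fun x => (x != 0) && (nu x == 0).

Lemma val_unitsM x y :
  x \in val_units -> y \in val_units -> x * y \in val_units.
Proof.
rewrite !unfold_in /= => /andP [x_neq0 /eqP nux] /andP [y_neq0 /eqP nuy].
by rewrite mulf_neq0 // nuM // nux nuy addr0 eqxx.
Qed.

Lemma val_units_prod (I : eqType) (r : seq I) (F : I -> K) :
  {in r, forall i, F i \in val_units} -> \prod_(i <- r) F i \in val_units.
Proof.
move=> F_units; rewrite big_seq.
apply: (big_ind (fun x => x \in val_units)) => //.
- by rewrite unfold_in /= oner_neq0 valuation1 eqxx.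
- exact: val_unitsM.
Qed.

Lemma val_units_not_max x : x \in val_units -> x \notin val_max nu.
Proof. by rewrite !unfold_in /= => /andP [/negPf -> /eqP ->]; rewrite ltxx. Qed.

Lemma val_units_of_ring x :
  x \in val_ring nu -> x \notin val_max nu -> x \in val_units.
Proof.
rewrite !unfold_in /= negb_or => /orP [->//|x_ge0] /andP [x_neq0 x_ngt0].
by rewrite x_neq0 eq_sym; move: x_ge0; rewrite le_eqVlt (negPf x_ngt0) orbF.
Qed.

Lemma mul_I_gt (R : {pred K}) t w :
  t != 0 -> t * w \in R -> w \in val_max nu -> t * w \in I_gt R nu (nu t).
Proof.
move=> t_neq0 twR; rewrite [_ \in I_gt _ _ _]unfold_in /= twR unfold_in /=.
have [->|w_neq0 /= w_gt0] := eqVneq w 0; first by rewrite mulr0 eqxx.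
by rewrite mulf_eq0 (negPf t_neq0) (negPf w_neq0) /= nuM // ltrDr_of_gt0.
Qed.

Lemma I_ge_not_gt (R : {pred K}) s y :
  y \in I_ge R nu s -> y \notin I_gt R nu s -> y != 0 /\ nu y = s.
Proof.
rewrite !unfold_in /= => /andP [-> /= s_le_y]; rewrite negb_or.
case/andP=> y_neq0 y_ngt; move: s_le_y; rewrite (negPf y_neq0) /=.
by rewrite le_eqVlt (negPf y_ngt) orbF => /eqP.
Qed.

Section ResidueField.

Variables (k : closedFieldType) (iota : {rmorphism k -> K}).
Hypothesis iota_val_ring : forall c, iota c \in val_ring nu.

Lemma valuation_iota c : c != 0 -> nu (iota c) = 0.
Proof.
move=> c_neq0; apply: valuation_unit; rewrite ?fmorph_eq0 //.
by rewrite -fmorphV.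
Qed.

Lemma algebraic_residue_const (p : {poly k}) z :
  p != 0 -> z \in val_ring nu -> (map_poly iota p).[z] \in val_max nu ->
  exists c, z - iota c \in val_max nu.
Proof.
move=> p_neq0 zV pz_max; have [r pE] := closed_field_poly_normal p.
have [/hasP [c _ zc_max]|no_root] :=
  boolP (has (fun c => z - iota c \in val_max nu) r); first by exists c.
exfalso; move: pz_max; apply/negP; apply: val_units_not_max.
rewrite pE map_polyZ rmorph_prod /= hornerZ horner_prod.
under eq_bigr do rewrite map_polyXsubC hornerXsubC.
apply: val_unitsM; last first.
  apply: val_units_prod => c c_in_r; apply: val_units_of_ring.
    exact: val_ringB.
  exact: hasPn no_root c c_in_r.
have lc_neq0 : lead_coef p != 0 by rewrite lead_coef_eq0.
by rewrite unfold_in /= fmorph_eq0 lc_neq0 valuation_iota ?eqxx.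
Qed.

End ResidueField.

End Valuation.

End OrderedGroup.

Theorem mainTheorem1 (k : closedFieldType) (K : fieldType)
  (iota : {rmorphism k -> K}) (R : {pred K})
  (G : porderZmodType) (nu : K -> G) :
  [pchar k] =i pred0 ->
  function_field_dim2 iota ->
  regular_local_dim2 R ->
  is_fraction_field R ->
  residue_field_k iota R ->
  ordered_abelian_group G ->
  is_valuation nu ->
  centered_on R nu ->
  non_divisorial iota nu ->
  forall t : K, t \in nonunits R -> t != 0 ->
    quot_dim1 iota (I_ge R nu (nu t)) (I_gt R nu (nu t)).
Proof.
move=> _ _ [[_ _ RB RM] _ _ _ _] _ [iotaR _] G_ord nu_val [RV _] nondiv t.
rewrite unfold_in /= => /andP [tR _] t_neq0.
exists t; split.
- by rewrite [_ \in I_ge _ _ _]unfold_in /= tR lexx orbT.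
- by rewrite [_ \in I_gt _ _ _]unfold_in /= tR (negPf t_neq0) ltxx.
move=> y yI; have [yIgt|yI_ngt] := boolP (y \in I_gt R nu (nu t)).
  by exists 0; rewrite rmorph0 mul0r subr0.
have [y_neq0 nuy] := I_ge_not_gt yI yI_ngt.
have zV : y / t \in val_ring nu.
  rewrite unfold_in /= nu_val.1 ?invr_eq0 //.
  by rewrite valuationV // nuy subrr lexx orbT.
have [p [p_neq0 pz_max]] := nondiv _ zV.
have iotaV c : iota c \in val_ring nu by apply/RV/iotaR.
have [c zc_max] := algebraic_residue_const G_ord nu_val iotaV p_neq0 zV pz_max.
have twE : t * (y / t - iota c) = y - iota c * t.
  by rewrite mulrBr mulrCA divff // mulr1 [t * _]mulrC.
exists c; rewrite -twE; apply: mul_I_gt => //; rewrite twE.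
have /andP [yR _] := yI.
exact: RB yR (RM _ _ (iotaR c) tR).
Qed.
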